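(* Let $S$ be a semiring, $\{P_i\}_{i\in I}$ a family of left $S$-semimodules and $M$ a left $S$-semimodule. Then $\bigoplus_{i\in I}P_i$ is $M$-$e$-projective if and only if $P_i$ is $M$-$e$-projective for each $i\in I$. Consequently, the class of $e$-projective left $S$-semimodules is closed under direct sums.
   Context: A semiring $(S,+,0,\cdot,1)$ consists of a commutative monoid $(S,+,0)$ and a monoid $(S,\cdot,1)$ with $0\neq 1$, absorbing zero and both distributive laws; left $S$-semimodules and $S$-linear maps are as for modules without subtraction; $\bigoplus_{i\in I}P_i$ is the (external) direct sum, i.e. the coproduct of finitely supported families. For an $S$-linear $h:X\to Y$, $\mathrm{Ker}(h)=\{x\mid h(x)=0\}$; $h$ is $k$-normal if $h(x)=h(x')$ implies $x+k=x'+k'$ for some $k,k'\in\mathrm{Ker}(h)$. A short exact sequence $0\to L\xrightarrow{f}M\xrightarrow{g}N\to0$ (of semimodules or commutative monoids) means: $f$ injective, $f(L)=\mathrm{Ker}(g)$, $g$ surjective and $k$-normal. $P$ is $M$-$e$-projective if for every short exact sequence $0\to L\xrightarrow{f}M\xrightarrow{g}N\to0$ of left $S$-semimodules with middle term $M$, the sequence $0\to\mathrm{Hom}_S(P,L)\xrightarrow{f\circ-}\mathrm{Hom}_S(P,M)\xrightarrow{g\circ-}\mathrm{Hom}_S(P,N)\to0$ is a short exact sequence of commutative monoids (Hom-sets with pointwise addition); $P$ is $e$-projective if it is $M$-$e$-projective for every $M$. *)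

From HB Require Import structures.
From mathcomp Require Import all_boot all_algebra.
From mathcomp Require Import boolp.
From Stdlib Require Import List.

Set Implicit Arguments.
Unset Strict Implicit.
Unset Printing Implicit Defensive.
Import GRing.Theory.
Local Open Scope ring_scope.

Definition slinear (S : nzSemiRingType) (X Y : lSemiModType S) (h : X -> Y) : Prop :=
  [/\ h 0 = 0,
      (forall x y, h (x + y) = h x + h y) &
      (forall (a : S) x, h (a *: x) = a *: h x)].

Definition Ker (A B : nmodType) (h : A -> B) : A -> Prop := fun x => h x = 0.

Definition knormal (A B : nmodType) (h : A -> B) : Prop :=
  forall x x', h x = h x' ->
    exists k k', Ker h k /\ Ker h k' /\ x + k = x' + k'.

Definition short_exact (A B C : nmodType) (f : A -> B) (g : B -> C) : Prop :=
  [/\ injective f,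
      (forall b, Ker g b <-> exists a, f a = b),
      (forall c, exists b, g b = c) &
      knormal g].

Section Hom.
Variables (S : nzSemiRingType) (P M : lSemiModType S).

Record hom := Hom { hom_fun : P -> M; hom_lin : slinear hom_fun }.

Lemma hom_ext (u v : hom) : hom_fun u = hom_fun v -> u = v.
Proof.
case: u v => fu lu [fv lv] /= e; subst fv.
by rewrite (Prop_irrelevance lu lv).
Qed.

HB.instance Definition _ := gen_eqMixin hom.
HB.instance Definition _ := gen_choiceMixin hom.

Lemma hom0_lin : slinear (fun _ : P => (0 : M)).
Proof. by split => // [x y|a x]; rewrite ?addr0 ?scaler0. Qed.
Definition hom0 := Hom hom0_lin.

Lemma homD_lin (u v : hom) : slinear (fun p => hom_fun u p + hom_fun v p).
Proof.
case: u v => fu [u0 uD uZ] [fv [v0 vD vZ]] /=; split.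
- by rewrite u0 v0 addr0.
- by move=> x y; rewrite uD vD addrACA.
- by move=> a x; rewrite uZ vZ scalerDr.
Qed.
Definition homD (u v : hom) := Hom (homD_lin u v).

Lemma homDA : associative homD.
Proof. by move=> u v w; apply: hom_ext; apply: funext => p /=; rewrite addrA. Qed.
Lemma homDC : commutative homD.
Proof. by move=> u v; apply: hom_ext; apply: funext => p /=; rewrite addrC. Qed.
Lemma hom0D : left_id hom0 homD.
Proof. by move=> u; apply: hom_ext; apply: funext => p /=; rewrite add0r. Qed.

HB.instance Definition _ := GRing.isNmodule.Build hom homDA homDC hom0D.

End Hom.

Section Post.
Variables (S : nzSemiRingType) (P X Y : lSemiModType S).
Variables (h : X -> Y) (hh : slinear h).

Lemma post_lin (u : hom P X) : slinear (fun p => h (hom_fun u p)).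
Proof.
case: hh => h0 hD hZ; case: u => fu [u0 uD uZ] /=; split.
- by rewrite u0 h0.
- by move=> x y; rewrite uD hD.
- by move=> a x; rewrite uZ hZ.
Qed.

Definition post (u : hom P X) : hom P Y := Hom (post_lin u).
End Post.

Definition M_e_projective (S : nzSemiRingType) (P M : lSemiModType S) : Prop :=
  forall (L N : lSemiModType S) (f : L -> M) (g : M -> N)
         (hf : slinear f) (hg : slinear g),
    short_exact f g ->
    short_exact (@post S P L M f hf) (@post S P M N g hg).

Definition e_projective (S : nzSemiRingType) (P : lSemiModType S) : Prop :=
  forall M : lSemiModType S, M_e_projective P M.

Section DirectSum.
Variables (S : nzSemiRingType) (I : Type) (P : I -> lSemiModType S).

Definition fin_supp (x : forall i, P i) : Prop :=
  exists s : list I, forall i, ~ List.In i s -> x i = 0.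

Record dsum := DSum { dsum_fun : forall i, P i; dsum_supp : fin_supp dsum_fun }.

Lemma dsum_ext (u v : dsum) : dsum_fun u = dsum_fun v -> u = v.
Proof.
case: u v => fu lu [fv lv] /= e; subst fv.
by rewrite (Prop_irrelevance lu lv).
Qed.

HB.instance Definition _ := gen_eqMixin dsum.
HB.instance Definition _ := gen_choiceMixin dsum.

Lemma dsum0_supp : fin_supp (fun i => 0 : P i).
Proof. by exists nil. Qed.
Definition dsum0 := DSum dsum0_supp.

Lemma dsumD_supp (u v : dsum) : fin_supp (fun i => dsum_fun u i + dsum_fun v i).
Proof.
case: u v => fu [s1 h1] [fv [s2 h2]] /=; exists (s1 ++ s2) => i hi.
rewrite h1 ?h2 ?addr0 // => H; apply: hi; apply: in_or_app; tauto.
Qed.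
Definition dsumD (u v : dsum) := DSum (dsumD_supp u v).

Lemma dsumDA : associative dsumD.
Proof. by move=> u v w; apply: dsum_ext; apply: functional_extensionality_dep => i /=; rewrite addrA. Qed.
Lemma dsumDC : commutative dsumD.
Proof. by move=> u v; apply: dsum_ext; apply: functional_extensionality_dep => i /=; rewrite addrC. Qed.
Lemma dsum0D : left_id dsum0 dsumD.
Proof. by move=> u; apply: dsum_ext; apply: functional_extensionality_dep => i /=; rewrite add0r. Qed.

HB.instance Definition _ := GRing.isNmodule.Build dsum dsumDA dsumDC dsum0D.

Lemma dsumZ_supp (a : S) (u : dsum) : fin_supp (fun i => a *: dsum_fun u i).
Proof. by case: u => fu [s h] /=; exists s => i hi; rewrite h // scaler0. Qed.
Definition dsumZ (a : S) (u : dsum) : dsum := DSum (dsumZ_supp a u).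

Lemma dsumZA a b (v : dsum) : dsumZ a (dsumZ b v) = dsumZ (a * b) v.
Proof. by apply: dsum_ext; apply: functional_extensionality_dep => i /=; rewrite scalerA. Qed.
Lemma dsumZ0 (v : dsum) : dsumZ 0 v = 0.
Proof. by apply: dsum_ext; apply: functional_extensionality_dep => i /=; rewrite scale0r. Qed.
Lemma dsumZ1 : left_id 1 dsumZ.
Proof. by move=> v; apply: dsum_ext; apply: functional_extensionality_dep => i /=; rewrite scale1r. Qed.
Lemma dsumZDr : right_distributive dsumZ +%R.
Proof. by move=> a u v; apply: dsum_ext; apply: functional_extensionality_dep => i /=; rewrite scalerDr. Qed.
Lemma dsumZDl (v : dsum) : {morph dsumZ^~ v : a b / a + b}.
Proof. by move=> a b; apply: dsum_ext; apply: functional_extensionality_dep => i /=; rewrite scalerDl. Qed.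

HB.instance Definition _ :=
  GRing.Nmodule_isLSemiModule.Build S dsum dsumZA dsumZ0 dsumZ1 dsumZDr dsumZDl.

End DirectSum.

Definition direct_sum (S : nzSemiRingType) (I : Type) (P : I -> lSemiModType S)
  : lSemiModType S := dsum P.

(* Restricting along the canonical injections identifies Hom_S(⊕ P_i, X) with
   the product of the Hom_S(P_i, X), naturally in X, and the projection onto
   P_i exhibits Hom_S(P_i, X) as a retract of Hom_S(⊕ P_i, X).  On a short
   exact sequence 0 → L → M → N → 0, Hom_S(P, -) is always injective on the
   left and exact in the middle, so P is M-e-projective exactly when
   post-composition with M → N is a surjective k-normal map of commutative
   monoids; such maps are stable under products and retracts. *)

From Pilot Require Import Defs.
From HB Require Import structures.
From mathcomp Require Import all_boot all_algebra boolp.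
From Stdlib Require List.

Set Implicit Arguments.
Unset Strict Implicit.
Unset Printing Implicit Defensive.
Import GRing.Theory.
Local Open Scope ring_scope.
Local Notation hom := Defs.hom.
Local Notation Hom := Defs.Hom.
Local Coercion hom_fun : Defs.hom >-> Funclass.
Local Coercion dsum_fun : dsum >-> Funclass.

Definition surj_knormal (A B : nmodType) (phi : A -> B) : Prop :=
  (forall b, exists a, phi a = b) /\ knormal phi.

Section Retract.
Variables (A B A' B' : nmodType) (phi : A -> B) (phi' : A' -> B').
Variables (r : A -> A') (s : A' -> A) (rB : B -> B') (sB : B' -> B).
Hypotheses (rD : {morph r : x y / x + y}) (rB0 : rB 0 = 0).
Hypotheses (sK : cancel s r) (sBK : cancel sB rB).
Hypothesis phi_r : forall a, phi' (r a) = rB (phi a).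
Hypothesis phi_s : forall a', phi (s a') = sB (phi' a').

Lemma surj_knormal_retract : surj_knormal phi -> surj_knormal phi'.
Proof.
case=> phi_surj phi_kn; split.
  by move=> b'; have [a phia] := phi_surj (sB b'); exists (r a); rewrite phi_r phia.
move=> a1 a2 /(congr1 sB); rewrite -!phi_s => /phi_kn[k [k' [kk [kk' e]]]].
exists (r k), (r k'); rewrite /Ker !phi_r kk kk' rB0; do 2!split=> //.
by rewrite -(sK a1) -(sK a2) -!rD e.
Qed.

End Retract.

Section Product.
Variables (I : Type) (A B : nmodType) (A_ B_ : I -> nmodType).
Variables (phi : A -> B) (phi_ : forall i, A_ i -> B_ i).
Variables (r : forall i, A -> A_ i) (rB : forall i, B -> B_ i).
Variable glue : (forall i, A_ i) -> A.
Arguments phi_ : clear implicits.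
Hypotheses (rD : forall i, {morph r i : x y / x + y}) (rB0 : forall i, rB i 0 = 0).
Hypothesis r_inj : forall a a', (forall i, r i a = r i a') -> a = a'.
Hypothesis rB_inj : forall b b', (forall i, rB i b = rB i b') -> b = b'.
Hypothesis r_glue : forall a i, r i (glue a) = a i.
Hypothesis phi_r : forall i a, phi_ i (r i a) = rB i (phi a).

Lemma Ker_glue (c : forall i, A_ i) : (forall i, phi_ i (c i) = 0) -> Ker phi (glue c).
Proof. by move=> c0; apply: rB_inj => i; rewrite -phi_r r_glue c0 rB0. Qed.

Lemma surj_knormal_prod : (forall i, surj_knormal (phi_ i)) -> surj_knormal phi.
Proof.
move=> phi_sk; split.
  move=> b; have lift i := (phi_sk i).1 (rB i b).
  exists (glue (fun i => proj1_sig (cid (lift i)))); apply: rB_inj => i.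
  by rewrite -phi_r r_glue; case: cid.
move=> a1 a2 e.
have kn i : exists kk : A_ i * A_ i,
    [/\ phi_ i kk.1 = 0, phi_ i kk.2 = 0 & r i a1 + kk.1 = r i a2 + kk.2].
  have ei : phi_ i (r i a1) = phi_ i (r i a2) by rewrite !phi_r e.
  have [k [k' [kk [kk' ek]]]] := (phi_sk i).2 _ _ ei.
  by exists (k, k').
pose k i := proj1_sig (cid (kn i)); have kP i := proj2_sig (cid (kn i)).
exists (glue (fun i => (k i).1)), (glue (fun i => (k i).2)).
split; [|split].
- by apply: Ker_glue => i; case: (kP i).
- by apply: Ker_glue => i; case: (kP i).
- by apply: r_inj => i; rewrite !rD !r_glue; case: (kP i).
Qed.

End Product.

Section HomComposition.
Variable S : nzSemiRingType.
Implicit Types X Y Z W : lSemiModType S.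

Lemma homE X Y (u v : hom X Y) : hom_fun u =1 hom_fun v -> u = v.
Proof. by move=> e; apply: hom_ext; apply: funext. Qed.

Lemma slinear_sum X Y (h : X -> Y) (T : Type) (r : seq T) (F : T -> X) :
  slinear h -> h (\sum_(i <- r) F i) = \sum_(i <- r) h (F i).
Proof. by case=> h0 hD _; apply: big_morph. Qed.

Definition hom_comp X Y Z (u : hom Y Z) (v : hom X Y) : hom X Z := post (hom_lin u) v.

Lemma hom_compDl X Y Z (u u' : hom Y Z) (v : hom X Y) :
  hom_comp (u + u') v = hom_comp u v + hom_comp u' v.
Proof. exact: homE. Qed.

Lemma hom_comp0l X Y Z (v : hom X Y) : hom_comp (0 : hom Y Z) v = 0.
Proof. exact: homE. Qed.

Lemma post_comp X Y Z W (g : Z -> W) (hg : slinear g) (u : hom Y Z) (v : hom X Y) :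
  post hg (hom_comp u v) = hom_comp (post hg u) v.
Proof. exact: homE. Qed.

End HomComposition.

Section LeftExactness.
Variables (S : nzSemiRingType) (P L M N : lSemiModType S).
Variables (f : L -> M) (g : M -> N) (hf : slinear f) (hg : slinear g).
Hypothesis f_inj : injective f.

Lemma post_injective : injective (@post S P L M f hf).
Proof.
move=> a b e; apply: homE => p; apply: f_inj.
exact: (congr1 (fun F : hom P M => F p) e).
Qed.

Lemma post_lift (b : hom P M) :
  (forall p, exists l, f l = b p) -> exists a, post hf a = b.
Proof.
move=> bf; pose a p := proj1_sig (cid (bf p)).
have aE p : f (a p) = b p by rewrite /a; case: cid.
have [f0 fD fZ] := hf; have [b0 bD bZ] := hom_lin b.
have a_lin : slinear a.
  split=> [|x y|c x]; apply: f_inj; by rewrite ?f0 ?fD ?fZ !aE ?b0 ?bD ?bZ.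
by exists (Hom a_lin); apply: homE => p /=.
Qed.

Lemma Ker_post_image :
  (forall b, Ker g b <-> exists a, f a = b) ->
  forall b, Ker (@post S P M N g hg) b <-> exists a, post hf a = b.
Proof.
move=> fker b; split=> [kb | [a <-]].
  apply: post_lift => p; apply/fker.
  by have := congr1 (fun F : hom P N => F p) kb.
by apply: homE => p /=; apply/fker; exists (a p).
Qed.

End LeftExactness.

Lemma M_e_projectiveP (S : nzSemiRingType) (P M : lSemiModType S) :
  M_e_projective P M <->
  forall (L N : lSemiModType S) (f : L -> M) (g : M -> N)
         (hf : slinear f) (hg : slinear g),
    short_exact f g -> surj_knormal (@post S P M N g hg).
Proof.
split=> [Hproj L N f g hf hg se | Hsk L N f g hf hg se].
  by have [_ _ ? ?] := Hproj L N f g hf hg se.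
have [f_inj fker _ _] := se; have [post_surj post_kn] := Hsk L N f g hf hg se.
by split=> //; [exact: post_injective | exact: Ker_post_image].
Qed.

(* The index type carries no decidable equality; boolp's classical one is
   needed to deduplicate the finite supports of elements of the direct sum. *)
Definition classic_eq (T : Type) : Type := T.
HB.instance Definition _ (T : Type) := gen_eqMixin (classic_eq T).

Lemma In_mem (T : eqType) (x : T) (s : seq T) : List.In x s -> x \in s.
Proof. by elim: s => //= y s IH [->|/IH]; rewrite inE ?eqxx // => ->; rewrite orbT. Qed.

Lemma big_undup_supp (T : eqType) (M : nmodType) (F : T -> M) (s1 s2 : seq T) :
  (forall i, i \notin s1 -> F i = 0) -> (forall i, i \notin s2 -> F i = 0) ->
  \sum_(i <- undup s1) F i = \sum_(i <- undup s2) F i.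
Proof.
move=> F1 F2; apply: perm_big_supp; apply: uniq_perm.
- exact/filter_uniq/undup_uniq.
- exact/filter_uniq/undup_uniq.
move=> i.
rewrite !mem_filter !mem_undup; case: eqVneq => //= Fi.
by rewrite (contra_neqT (F1 i) Fi) (contra_neqT (F2 i) Fi).
Qed.

Section DirectSum.
Variables (S : nzSemiRingType) (I : Type) (P : I -> lSemiModType S).
Local Notation J := (classic_eq I).
Local Notation D := (dsum P).

Lemma dsum_proj_lin i : slinear (fun x : D => x i).
Proof. by []. Qed.
Definition dsum_proj i : hom D (P i) := Hom (dsum_proj_lin i).

Definition dsum_inj_fun i (x : P i) j : P j :=
  if pselect (i = j) is left e then eq_rect i (fun j => P j : Type) x j e else 0.

Lemma dsum_inj_fun_eq i (x : P i) : dsum_inj_fun x i = x.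
Proof.
by rewrite /dsum_inj_fun; case: pselect => // e; rewrite (Prop_irrelevance e erefl).
Qed.

Lemma dsum_inj_fun_neq i j (x : P i) : i <> j -> dsum_inj_fun x j = 0.
Proof. by rewrite /dsum_inj_fun; case: pselect. Qed.

Lemma dsum_inj_supp i (x : P i) : fin_supp (dsum_inj_fun x).
Proof. by exists [:: i] => j ij; apply: dsum_inj_fun_neq => e; apply: ij; left. Qed.

Definition dsum_inj_val i (x : P i) : D := DSum (dsum_inj_supp x).

Lemma dsum_inj_lin i : slinear (@dsum_inj_val i).
Proof.
split=> [|x y|a x]; apply: dsum_ext; apply: functional_extensionality_dep => j /=;
  rewrite /dsum_inj_fun; case: pselect => [e|_]; by [subst j | rewrite ?addr0 ?scaler0].
Qed.
Definition dsum_inj i : hom (P i) D := Hom (dsum_inj_lin i).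

Lemma hom_comp_proj_inj (X : lSemiModType S) i (w : hom (P i) X) :
  hom_comp (hom_comp w (dsum_proj i)) (dsum_inj i) = w.
Proof. by apply: homE => x /=; rewrite dsum_inj_fun_eq. Qed.

Definition supported_on (x : D) (s : seq J) : Prop :=
  forall i : J, i \notin s -> x i = 0.

Definition supp_seq (x : D) : seq J := proj1_sig (cid (dsum_supp x)).

Lemma supported_on_supp_seq x : supported_on x (supp_seq x).
Proof.
rewrite /supp_seq; case: cid => s xs i si; apply: (xs i) => /(@In_mem J).
exact/negP.
Qed.
Arguments supported_on_supp_seq : clear implicits.

Lemma supported_on_catl x s1 s2 : supported_on x s1 -> supported_on x (s1 ++ s2).
Proof. by move=> xs i; rewrite mem_cat negb_or => /andP[/xs]. Qed.

Lemma supported_on_catr x s1 s2 : supported_on x s2 -> supported_on x (s1 ++ s2).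
Proof. by move=> xs i; rewrite mem_cat negb_or => /andP[_ /xs]. Qed.

Lemma dsum_decomp x s :
  supported_on x s -> x = \sum_(i <- undup s) dsum_inj i (x i).
Proof.
move=> xs; apply: dsum_ext; apply: functional_extensionality_dep => j.
rewrite -[RHS]/(dsum_proj j _) (slinear_sum _ _ (hom_lin _)) /=.
have [js|js] := boolP ((j : J) \in undup s).
  rewrite (bigD1_seq (j : J)) ?undup_uniq //= dsum_inj_fun_eq big1 ?addr0 // => i ij.
  by apply: dsum_inj_fun_neq => e; rewrite e eqxx in ij.
rewrite xs; last by rewrite -mem_undup.
rewrite big1_seq // => i /andP[_ i_s].
by apply: dsum_inj_fun_neq => e; rewrite -e i_s in js.
Qed.

Lemma dsum_hom_ext (X : lSemiModType S) (u v : hom D X) :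
  (forall i, hom_comp u (dsum_inj i) = hom_comp v (dsum_inj i)) -> u = v.
Proof.
move=> uv; apply: homE => x; rewrite (dsum_decomp (supported_on_supp_seq x)).
rewrite !(slinear_sum _ _ (hom_lin _)); apply: eq_bigr => i _.
by have := congr1 (fun w : hom (P i) X => w (x i)) (uv i).
Qed.

Section Glue.
Variables (X : lSemiModType S) (h : forall i, hom (P i) X).

Definition dsum_glue_fun (x : D) : X :=
  \sum_(i <- undup (supp_seq x)) h i (x i).

Lemma dsum_glue_funE x s : supported_on x s ->
  dsum_glue_fun x = \sum_(i <- undup s) h i (x i).
Proof.
have h0 i : h i 0 = 0 by case: (hom_lin (h i)).
move=> xs; apply: big_undup_supp => i.
  by move=> /(supported_on_supp_seq x) ->; apply: h0.
by move=> /xs ->; apply: h0.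
Qed.

Lemma dsum_glue_lin : slinear dsum_glue_fun.
Proof.
split=> [|x y|a x].
- by rewrite (@dsum_glue_funE 0 [::]) ?big_nil.
- pose s := supp_seq x ++ supp_seq y.
  have xs : supported_on x s := supported_on_catl (supported_on_supp_seq x).
  have ys : supported_on y s := supported_on_catr (supported_on_supp_seq y).
  have xys : supported_on (x + y) s by move=> i i_n /=; rewrite xs ?ys ?addr0.
  rewrite (dsum_glue_funE xys) (dsum_glue_funE xs) (dsum_glue_funE ys) -big_split.
  by apply: eq_bigr => i _; case: (hom_lin (h i)) => _ -> _.
- have axs : supported_on (a *: x) (supp_seq x).
    by move=> i i_n /=; rewrite supported_on_supp_seq ?scaler0.
  rewrite (dsum_glue_funE axs) scaler_sumr; apply: eq_bigr => i _.
  by case: (hom_lin (h i)) => _ _ ->.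
Qed.
Definition dsum_glue : hom D X := Hom dsum_glue_lin.

Lemma hom_comp_glue_inj i : hom_comp dsum_glue (dsum_inj i) = h i.
Proof.
have xs (x : P i) : supported_on (dsum_inj i x) [:: i].
  by move=> j; rewrite inE => /eqP ij; apply: dsum_inj_fun_neq => e; apply: ij; rewrite e.
by apply: homE => x /=; rewrite (dsum_glue_funE (xs x)) /= big_seq1 dsum_inj_fun_eq.
Qed.

End Glue.

Lemma dsum_M_e_projective (M : lSemiModType S) :
  M_e_projective D M <-> forall i, M_e_projective (P i) M.
Proof.
split=> [D_proj i | P_proj]; apply/M_e_projectiveP => L N f g hf hg se.
  apply: (@surj_knormal_retract _ _ _ _ (post hg) (post hg)
    (fun u => hom_comp u (dsum_inj i)) (fun u => hom_comp u (dsum_proj i))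
    (fun u => hom_comp u (dsum_inj i)) (fun u => hom_comp u (dsum_proj i))).
  - by move=> u v; apply: hom_compDl.
  - exact: hom_comp0l.
  - by move=> w; apply: hom_comp_proj_inj.
  - by move=> w; apply: hom_comp_proj_inj.
  - by move=> u; apply: post_comp.
  - by move=> w; apply: post_comp.
  - exact: (M_e_projectiveP D M).1 D_proj L N f g hf hg se.
apply: (@surj_knormal_prod I _ _ _ _ (post hg) (fun i => post hg)
  (fun i u => hom_comp u (dsum_inj i)) (fun i u => hom_comp u (dsum_inj i)) (@dsum_glue M)).
- by move=> i u v; apply: hom_compDl.
- by move=> i; apply: hom_comp0l.
- exact: dsum_hom_ext.
- exact: dsum_hom_ext.
- exact: hom_comp_glue_inj.
- by move=> i u; apply: post_comp.
- by move=> i; apply: (M_e_projectiveP (P i) M).1 (P_proj i) L N f g hf hg se.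
Qed.

End DirectSum.

Theorem mainTheorem11 :
  (forall (S : nzSemiRingType) (I : Type) (P : I -> lSemiModType S)
          (M : lSemiModType S),
     M_e_projective (direct_sum P) M <-> (forall i : I, M_e_projective (P i) M))
  /\
  (forall (S : nzSemiRingType) (I : Type) (P : I -> lSemiModType S),
     (forall i : I, e_projective (P i)) -> e_projective (direct_sum P)).
Proof.
split=> [S I P M | S I P P_proj M]; first exact: dsum_M_e_projective.
by apply/dsum_M_e_projective => i; apply: P_proj.
Qed.
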